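(* For every message $M$: $\vdash\neg\neg\mathsf{k}_{\mathsf{CM}}(M)$.
   Context: Fix a finite set $\mathcal{A}$ of agent names containing a distinguished name $\mathsf{CM}$. Messages: $M ::= a \mid B \mid (M,M)$ ($a\in\mathcal{A}$, $B$ optional data constants, pairs). $\mathcal{P}$ is a denumerable set of propositional variables containing atoms $\mathsf{k}_a(M)$ (''$a$ knows $M$''). Formulas: $\phi ::= P \mid \phi\wedge\phi \mid \phi\vee\phi \mid \neg\phi \mid \phi\to\phi \mid [M]\phi$. Abbreviations: $\mathrm{true}:=\mathsf{k}_{\mathsf{CM}}(\mathsf{CM})$, $\mathrm{false}:=\neg\mathrm{true}$, $\phi\leftrightarrow\psi:=(\phi\to\psi)\wedge(\psi\to\phi)$, $\langle M\rangle\phi:=\neg\neg(\mathsf{k}_{\mathsf{CM}}(M)\wedge\phi)$. LIiP is the smallest set of formulas containing all instances of: the axioms of an adequate Hilbert axiomatization of intuitionistic propositional logic; $\mathsf{k}_a(a)$; $(\mathsf{k}_a(M)\wedge\mathsf{k}_a(M'))\leftrightarrow\mathsf{k}_a((M,M'))$; $[M]\mathsf{k}_{\mathsf{CM}}(M)$; $[M](\phi\to\psi)\to([M]\phi\to[M]\psi)$; $[M]\phi\to(\mathsf{k}_{\mathsf{CM}}(M)\to\phi)$; $[M]\phi\to\langle M\rangle\phi$; $\phi\to[M]\phi$; and closed under modus ponens and the rule: if $\mathsf{k}_{\mathsf{CM}}(M)\to\mathsf{k}_{\mathsf{CM}}(M')$ is in the set then so is $[M']\phi\to[M]\phi$ for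 every $\phi$. Write $\vdash\phi$ for $\phi\in\mathrm{LIiP}$. *)

From mathcomp Require Import all_boot.
Set Implicit Arguments.
Unset Strict Implicit.

Section LIiP.
Variable Agent : finType.
Variable CM : Agent.
Variable Data : Type.

Inductive msg : Type :=
| MAgent : Agent -> msg
| MData : Data -> msg
| MPair : msg -> msg -> msg.

Inductive pvar : Type :=
| PK : Agent -> msg -> pvar
| POther : nat -> pvar.

Inductive form : Type :=
| FVar : pvar -> form
| FAnd : form -> form -> form
| FOr : form -> form -> form
| FNeg : form -> form
| FImp : form -> form -> form
| FBox : msg -> form -> form.

Definition K (a : Agent) (M : msg) : form := FVar (PK a M).
Definition FTrue : form := K CM (MAgent CM).
Definition FFalse : form := FNeg FTrue.
Definition FIff (p q : form) : form := FAnd (FImp p q) (FImp q p).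
Definition FDia (M : msg) (p : form) : form := FNeg (FNeg (FAnd (K CM M) p)).

(* LIiP: Kleene's Hilbert axiomatization of IPC (negation primitive) plus the
   LIiP axioms, closed under modus ponens and the monotonicity rule. *)
Inductive LIiP : form -> Prop :=
| ax_K p q : LIiP (FImp p (FImp q p))
| ax_S p q r : LIiP (FImp (FImp p (FImp q r)) (FImp (FImp p q) (FImp p r)))
| ax_andE1 p q : LIiP (FImp (FAnd p q) p)
| ax_andE2 p q : LIiP (FImp (FAnd p q) q)
| ax_andI p q : LIiP (FImp p (FImp q (FAnd p q)))
| ax_orI1 p q : LIiP (FImp p (FOr p q))
| ax_orI2 p q : LIiP (FImp q (FOr p q))
| ax_orE p q r : LIiP (FImp (FImp p r) (FImp (FImp q r) (FImp (FOr p q) r)))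
| ax_negI p q : LIiP (FImp (FImp p q) (FImp (FImp p (FNeg q)) (FNeg p)))
| ax_negE p q : LIiP (FImp (FNeg p) (FImp p q))
| ax_self a : LIiP (K a (MAgent a))
| ax_pair a M M' : LIiP (FIff (FAnd (K a M) (K a M')) (K a (MPair M M')))
| ax_boxK M : LIiP (FBox M (K CM M))
| ax_boxDist M p q : LIiP (FImp (FBox M (FImp p q)) (FImp (FBox M p) (FBox M q)))
| ax_boxT M p : LIiP (FImp (FBox M p) (FImp (K CM M) p))
| ax_boxDia M p : LIiP (FImp (FBox M p) (FDia M p))
| ax_unit M p : LIiP (FImp p (FBox M p))
| rule_mp p q : LIiP (FImp p q) -> LIiP p -> LIiP q
| rule_mono M M' p : LIiP (FImp (K CM M) (K CM M')) ->
                     LIiP (FImp (FBox M' p) (FBox M p)).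

End LIiP.

(* From [M]k_CM(M) and [M]phi -> <M>phi we get ~~(k_CM(M) /\ k_CM(M)), and
   contraposing the projection k_CM(M) /\ k_CM(M) -> k_CM(M) twice turns this
   into ~~k_CM(M). *)
From mathcomp Require Import all_boot.

Section Derived.
Variable Agent : finType.
Variable CM : Agent.
Variable Data : Type.
Notation derivable := (@LIiP Agent CM Data).

Lemma LIiP_imp_trans (p q r : form Agent Data) :
  derivable (FImp p q) -> derivable (FImp q r) -> derivable (FImp p r).
Proof.
move=> hpq hqr.
have hp_qr : derivable (FImp p (FImp q r)) by exact: rule_mp (ax_K CM _ _) hqr.
exact: rule_mp (rule_mp (ax_S CM _ _ _) hp_qr) hpq.
Qed.

Lemma LIiP_contra (p q : form Agent Data) :
  derivable (FImp p q) -> derivable (FImp (FNeg q) (FNeg p)).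
Proof.
move=> hpq.
have hneg : derivable (FImp (FImp p (FNeg q)) (FNeg p)).
  exact: rule_mp (ax_negI CM _ _) hpq.
exact: LIiP_imp_trans (ax_K CM _ _) hneg.
Qed.

Lemma LIiP_dia_self (M : msg Agent Data) : derivable (FDia CM M (K CM M)).
Proof. exact: rule_mp (ax_boxDia CM _ _) (ax_boxK CM M). Qed.

End Derived.

Arguments LIiP_contra {Agent CM Data p q}.
Arguments LIiP_dia_self {Agent} CM {Data} M.

Theorem theorem2p11 (Agent : finType) (CM : Agent) (Data : Type)
    (M : msg Agent Data) :
  LIiP CM (FNeg (FNeg (K CM M))).
Proof.
have hnnpair := LIiP_contra (LIiP_contra (ax_andE1 CM (K CM M) (K CM M))).
exact: rule_mp hnnpair (LIiP_dia_self CM M).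
Qed.
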